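(* Let $B=2^{k_1}C_1\perp\cdots\perp2^{k_r}C_r\in\mathcal H_n(\mathfrak o)$ be a pre-optimal form, $B_1=2^{k_1}C_1\perp\cdots\perp2^{k_{r-1}}C_{r-1}$, $n_1=\deg B_1$, $n_2=\deg C_r$. (1) Let $n_2=1$. (1.1) If $n_1$ is even, then $\Delta(B)-\Delta(B_1)=k_r+2$ if $\mathrm{ord}(\det B_1)$ is odd; $=k_r+1$ if $\mathrm{ord}(\det B_1)$ is even and $\xi_{B_1}=0$; $=k_r$ if $\xi_{B_1}\ne0$. (1.2) If $n_1$ is odd, then $\Delta(B)-\Delta(B_1)=k_r$ if $\mathrm{ord}(\det B)$ is odd; $=k_r+1$ if $\mathrm{ord}(\det B)$ is even and $\xi_B=0$; $=k_r+2$ if $\xi_B\ne0$. (2) If $n_2=2$ and $C_r$ is unimodular diagonal, then $\Delta(B)=\Delta(B_1)+2k_r+2$. (3) If $C_r\in\frac12(S_2(\mathfrak o)_e\cap GL_2(\mathfrak o))$, then $\Delta(B)=\Delta(B_1)+2k_r$.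
   Context: Let $F$ be a finite unramified extension of $\mathbb Q_2$ with ring of integers $\mathfrak o$, $\mathrm{ord}$ the valuation with $\mathrm{ord}(2)=1$, $\mathrm{ord}(0)=+\infty$. $\mathcal H_n(\mathfrak o)$ is the set of symmetric $B=(b_{ij})\in M_n(F)$ with $b_{ii}\in\mathfrak o$, $2b_{ij}\in\mathfrak o$. $\perp$ is block-diagonal sum. For nondegenerate $B$ of degree $n$: $D_B=(-4)^{[n/2]}\det B$; $\xi_B=1,-1,0$ according as $D_B\in F^{\times2}$, $F(\sqrt{D_B})/F$ unramified quadratic, or ramified; $\mathfrak D_B$ is the discriminant ideal of $F(\sqrt{D_B})/F$ (the unit ideal if $D_B$ is a square); $\Delta(B)=\mathrm{ord}(D_B)$ if $n$ is odd and $\Delta(B)=\mathrm{ord}(D_B)-\mathrm{ord}(\mathfrak D_B)+1-\xi_B^2$ if $n$ is even. For the empty matrix, $\det=1$, $\xi=1$, $\Delta=0$. $S_2(\mathfrak o)_e$: symmetric $2\times2$ matrices over $\mathfrak o$ with diagonal in $2\mathfrak o$; unimodular diagonal: diagonal with unit entries. Pre-optimal forms: $B=2^{k_1}C_1\perp\cdots\perp2^{k_r}C_r$ with $k_i\ge0$, each $C_i$ unimodular diagonal or in $\frac12(S_2(\mathfrak o)_e\cap GL_2(\mathfrak o))$; $B^{[j]}=2^{k_1}C_1\perp\cdots\perp2^{k_j}C_j$; $\mathcal D_m=\{j:k_j=m,C_j\text{ diagonal}\}$, $\mathcal E_m=\{j:k_j=m,C_j\text{ not diagonal}\}$. Pre-optimal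 means: (PO1) $\sum_{j\in\mathcal D_m}\deg C_j\le2$ and $\mathcal E_m$ is a (possibly empty) set of consecutive integers, for each $m$; (PO2) for $i<j$: $i\in\mathcal D_{m_1},j\in\mathcal D_{m_2}\Rightarrow m_1\le m_2$; $i\in\mathcal E_{m_1},j\in\mathcal E_{m_2}\Rightarrow m_1\le m_2$; $i\in\mathcal D_{m_1},j\in\mathcal E_{m_2}\Rightarrow m_1\le m_2-1$; $i\in\mathcal E_{m_1},j\in\mathcal D_{m_2}\Rightarrow m_1\le m_2+1$; (PO3) if $C_i$ is unimodular diagonal of degree 2 then $i\ge2$ and either ($\deg B^{[i]}$ even and $\xi_{B^{[i-1]}}=\xi_{B^{[i]}}=0$) or ($\deg B^{[i-1]}$ odd and $\mathrm{ord}\det B^{[i-1]}+k_i$ even); (PO4) if $k_i=k_{i-1}-1$, $C_i$ diagonal, $C_{i-1}$ not diagonal, then $\deg C_i=2$, or $\deg C_i=1$ and either ($\deg B^{[i]}$ and $\mathrm{ord}\det B^{[i]}$ even) or ($\deg B^{[i]}$ odd and $\xi_{B^{[i-1]}}=0$); (PO5) if $C_i$ diagonal, $C_{i+1}$ not diagonal, $k_i=k_{i+1}-1$, then $\deg C_i=1$ and either ($\deg B^{[i]}$ even and $\mathrm{ord}\det B^{[i]}$ odd) or ($\deg B^{[i]}$ odd and $\xi_{B^{[i-1]}}\ne0$ if $i\ge2$); (PO6) if $\deg B^{[i]}$ even, $C_i,C_{i+1}$ unimodular diagonal, $k_{i+1}=k_i+1$, then $\xi_{B^{[i]}}=0$.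 *)

From HB Require Import structures.
From mathcomp Require Import all_boot all_order all_algebra.
From Stdlib Require Import ClassicalEpsilon.
Set Implicit Arguments. Unset Strict Implicit. Unset Printing Implicit Defensive.
Import Order.TTheory GRing.Theory Num.Theory.
Local Open Scope ring_scope.

Section Local2adic.
Variables (F : fieldType) (v : F -> int).

(* x in the valuation ring o  (ord 0 = +oo) *)
Definition integ (x : F) : bool := (x == 0) || (0 <= v x).
Definition unitb (x : F) : bool := (x != 0) && (v x == 0).

(* F together with ord is a complete discretely valued field with uniformizer 2
   (ord(2) = 1) and finite residue field o/2o; these are exactly the finite
   unramified extensions of Q_2. *)
Record unram2adic : Prop := Unram2adic {
  two_neq0 : (2%:R : F) != 0;
  v_mul : forall x y, x != 0 -> y != 0 -> v (x * y) = v x + v y;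
  v_add : forall x y, x != 0 -> y != 0 -> x + y != 0 ->
          Num.min (v x) (v y) <= v (x + y);
  v_two : v 2%:R = 1;
  residue_finite : exists s : seq F, forall x, integ x ->
          exists2 y, y \in s & (x == y) || (1 <= v (x - y));
  complete : forall u : nat -> F,
     (forall e : int, exists N, forall m n, (N <= m)%N -> (N <= n)%N ->
         (u m == u n) || (e <= v (u m - u n))) ->
     exists L, forall e : int, exists N, forall n, (N <= n)%N ->
         (u n == L) || (e <= v (u n - L))
}.

Definition oddz (z : int) : bool := odd `|z|%N.

Definition pb (P : Prop) : bool := if excluded_middle_informative P then true else false.
Lemma pbP (P : Prop) : P -> pb P.
Proof. by rewrite /pb; case: excluded_middle_informative. Qed.

Definition is_square (D : F) : Prop := exists y : F, y * y = D.

(* The algebra F(sqrt D) = F[X]/(X^2 - D), elements a + b sqrt D as pairs (a,b). *)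
Definition addK (x y : F * F) : F * F := (x.1 + y.1, x.2 + y.2).
Definition mulK (D : F) (x y : F * F) : F * F :=
  (x.1 * y.1 + D * x.2 * y.2, x.1 * y.2 + x.2 * y.1).
Definition evalK (D : F) (p : {poly F}) (x : F * F) : F * F :=
  foldr (fun c acc => addK (c, 0) (mulK D acc x)) (0, 0) p.
Definition intK (D : F) (x : F * F) : Prop :=
  exists p : {poly F}, p \is monic /\ (forall i, integ p`_i) /\ evalK D p x = (0, 0).
Definition trK (x : F * F) : F := 2%:R * x.1.
Definition detTr (D : F) (x1 x2 : F * F) : F :=
  trK (mulK D x1 x1) * trK (mulK D x2 x2) - trK (mulK D x1 x2) ^+ 2.
Definition discset (D : F) (n : nat) : Prop :=
  exists x1 x2, intK D x1 /\ intK D x2 /\ detTr D x1 x2 != 0 /\ v (detTr D x1 x2) = n%:Z.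

Lemma discset_ex (D : F) : (exists n, discset D n) -> exists n, pb (discset D n).
Proof. by case=> n Hn; exists n; apply: pbP. Qed.

(* ord of the discriminant ideal of F(sqrt D)/F : the ideal generated by all the
   discriminants d(x1,x2) of bases contained in O_K, i.e. the minimal ord;
   the unit ideal if D is a square. *)
Definition ordDisc (D : F) : nat :=
  if pb (is_square D) then 0%N else
  match excluded_middle_informative (exists n, discset D n) with
  | left H => ex_minn (discset_ex H)
  | right _ => 0%N
  end.

(* xi : 1 if square, -1 if F(sqrt D)/F unramified quadratic (discriminant ideal
   is the unit ideal), 0 if ramified *)
Definition xi (D : F) : int :=
  if pb (is_square D) then 1 else if ordDisc D == 0%N then -1 else 0.

Definition DB n (M : 'M[F]_n) : F := (-4) ^+ (n./2) * \det M.
Definition xiB n (M : 'M[F]_n) : int := xi (DB M).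
Definition Delta n (M : 'M[F]_n) : int :=
  if odd n then v (DB M)
  else v (DB M) - (ordDisc (DB M))%:Z + 1 - (xiB M) ^+ 2.

Definition unimod_diag n (M : 'M[F]_n) : bool :=
  [forall i, forall j, (i != j) ==> (M i j == 0)] && [forall i, unitb (M i i)].
(* M in 1/2 (S_2(o)_e \cap GL_2(o)) *)
Definition half_even_unimod n (M : 'M[F]_n) : bool :=
  (n == 2)%N && [forall i, forall j, (M i j == M j i) && integ (2%:R * M i j)]
  && [forall i, integ (M i i)] && unitb (\det (2%:R *: M)).

(* block data: block i (0-based) is 2^(k i) C i of size d i *)
Fixpoint dsum (d : nat -> nat) (j : nat) : nat :=
  match j with 0 => 0%N | j'.+1 => (dsum d j' + d j')%N end.

Fixpoint Bpre (d k : nat -> nat) (C : forall i, 'M[F]_(d i)) (j : nat)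
  : 'M[F]_(dsum d j) :=
  match j return 'M[F]_(dsum d j) with
  | 0 => 0
  | j'.+1 => block_mx (Bpre k C j') 0 0 ((2%:R ^+ k j') *: C j')
  end.

(* Pre-optimality of 2^{k_0}C_0 _|_ ... _|_ 2^{k_{N-1}}C_{N-1}; paper index i = our i+1,
   paper B^[i] = Bpre (i+1) *)
Definition preoptimal (N : nat) (d k : nat -> nat) (C : forall i, 'M[F]_(d i)) : Prop :=
  let dg i := unimod_diag (C i) in
  let B j := Bpre k C j in
  (forall i, (i < N)%N -> (0 < d i)%N /\ (dg i || half_even_unimod (C i))) /\
  (forall m : nat,
     (\sum_(i < N | (k i == m) && dg i) d i <= 2)%N /\
     (forall i j l, (i <= j <= l)%N -> (l < N)%N ->
        k i = m -> ~~ dg i -> k l = m -> ~~ dg l -> k j = m /\ ~~ dg j)) /\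
  (forall i j, (i < j < N)%N ->
     (dg i -> dg j -> (k i <= k j)%N) /\
     (~~ dg i -> ~~ dg j -> (k i <= k j)%N) /\
     (dg i -> ~~ dg j -> (k i + 1 <= k j)%N) /\
     (~~ dg i -> dg j -> (k i <= k j + 1)%N)) /\
  (forall i, (i < N)%N -> dg i -> d i = 2%N ->
     (1 <= i)%N /\
     ((~~ odd (dsum d i.+1) /\ xiB (B i) = 0 /\ xiB (B i.+1) = 0) \/
      (odd (dsum d i) /\ ~~ oddz (v (\det (B i)) + (k i)%:Z)))) /\
  (forall i, (1 <= i)%N -> (i < N)%N -> k (i.-1) = (k i).+1 -> dg i -> ~~ dg (i.-1) ->
     d i = 2%N \/
     (d i = 1%N /\
      ((~~ odd (dsum d i.+1) /\ ~~ oddz (v (\det (B i.+1)))) \/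
       (odd (dsum d i.+1) /\ xiB (B i) = 0)))) /\
  (forall i, (i.+1 < N)%N -> dg i -> ~~ dg i.+1 -> k i.+1 = (k i).+1 ->
     d i = 1%N /\
     ((~~ odd (dsum d i.+1) /\ oddz (v (\det (B i.+1)))) \/
      (odd (dsum d i.+1) /\ ((1 <= i)%N -> xiB (B i) != 0)))) /\
  (forall i, (i.+1 < N)%N -> ~~ odd (dsum d i.+1) -> dg i -> dg i.+1 ->
     k i.+1 = (k i).+1 -> xiB (B i.+1) = 0).

End Local2adic.
Arguments preoptimal [F] v N d k C.

(* Splitting off the last block multiplies the discriminant D_1 of B_1 by
   2^k u, -4 2^k u, -4 4^k u or 4^k (-4 det C_r) (u a unit) in the cases (1.1),
   (1.2), (2) and (3), and -4 det C_r lies in F^x2 (1 + 4o) in case (3).  For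
   even degree, Delta = v(D) - ord(disc) + 1 - xi^2 equals v(D) - 2, v(D) - 1 or
   v(D) according as v(D) is odd, v(D) is even with xi = 0, or xi <> 0; the
   theorem is bookkeeping with this formula.  It rests on the discriminant
   ideal of F(sqrt D): the basis (1, sqrt D / 2^[v(D)/2]) bounds its ord by 2 or
   3; integrality of norms of integral elements (a Gauss lemma for monic
   polynomials) fixes its parity and gives ord >= 3 when v(D) is odd; and the
   ord is 0 exactly when D lies in F^x2 (1 + 4o), a class stable under
   multiplication by F^x2 (1 + 4o). *)

From HB Require Import structures.
From mathcomp Require Import all_boot all_order all_algebra.
From mathcomp Require Import zify ring.
From Stdlib Require Import ClassicalEpsilon.
Set Implicit Arguments. Unset Strict Implicit. Unset Printing Implicit Defensive.
Import Order.TTheory GRing.Theory Num.Theory.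
Local Open Scope ring_scope.

Lemma det_mx22 (R : comNzRingType) (M : 'M[R]_2) :
  \det M = M 0 0 * M 1 1 - M 0 1 * M 1 0.
Proof.
rewrite (expand_det_row _ 0) !big_ord_recl big_ord0 /cofactor !det_mx11 !mxE /=.
have lift0 (i : 'I_2) (j : 'I_1) : lift i j = (if i == 0 then 1 else 0) :> 'I_2.
  by apply/val_inj; case: i => [[|[|]]] //= ?; case: j => [[|]].
by rewrite !lift0 /= !expr0 !expr1; ring.
Qed.

Lemma horner_mx_size1_eq0 (R : comNzRingType) n (A : 'M[R]_n.+1) (r : {poly R}) :
  (size r <= 1)%N -> horner_mx A r = 0 -> r = 0.
Proof.
move=> /size1_polyC-> /matrixP/(_ 0 0); rewrite horner_mx_C !mxE /= mulr1n => ->.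
by rewrite polyC0.
Qed.

Section RegularRepresentation.
Variables (F : fieldType) (D : F).
Implicit Types (a b c : F) (p r : {poly F}).

(* The matrix of multiplication by y.1 + y.2 sqrt D in the basis (1, sqrt D). *)
Definition regmx (y : F * F) : 'M[F]_2 :=
  \matrix_(i < 2, j < 2)
    (if i == j then y.1 else if (i : nat) == 0%N then D * y.2 else y.2).

Lemma regmx_scalar a : regmx (a, 0) = a%:M.
Proof. by apply/matrixP => i j; rewrite !mxE /= mulr0 if_same; case: (i == j). Qed.

Lemma regmx_eq0 y : regmx y = 0 -> y = (0, 0).
Proof.
case: y => a b /matrixP eq0; have := eq0 0 0; have := eq0 1 0.
by rewrite !mxE /= => -> ->.
Qed.

Lemma regmx_evalK p x : regmx (evalK D p x) = horner_mx (regmx x) p.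
Proof.
rewrite -{2}(polyseqK p) /evalK; elim: (polyseq p) => [|c s IH] /=.
  by rewrite rmorph0; apply/matrixP => i j; rewrite !mxE /= mulr0 !if_same.
rewrite cons_poly_def rmorphD rmorphM /= horner_mx_X horner_mx_C -IH.
apply/matrixP => i j; rewrite -mulmxE !mxE big_ord_recl big_ord1 !mxE.
by case: i => [[|[|i]] Hi] //; case: j => [[|[|j]] Hj] //=;
  rewrite /addK /mulK /= ?mulr0n ?mulr1n; ring.
Qed.

Lemma regmx_annihilator_size a b r : b != 0 ->
  (size r < 3)%N -> horner_mx (regmx (a, b)) r = 0 -> r = 0.
Proof.
move=> b0 sr; have er : r = (r`_0)%:P + (r`_1)%:P * 'X.
  apply/polyP => i; rewrite coefD coefC coefMX coefC.
  case: i => [|[|i]] /=; rewrite ?addr0 ?add0r //.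
  by rewrite nth_default // -ltnS; exact: leq_trans sr (leq_addr i 3).
rewrite er rmorphD rmorphM /= !horner_mx_C horner_mx_X => /matrixP eq0.
have := eq0 0 0; have := eq0 1 0.
rewrite -mulmxE !mxE !big_ord_recl !big_ord0 !mxE /= !mulr0n !mulr1n !mul0r !add0r.
rewrite addr0 => /eqP; rewrite mulf_eq0 (negPf b0) orbF => /eqP->.
by rewrite mul0r !addr0 => ->; rewrite !polyC0 mul0r addr0.
Qed.

Lemma char_poly_regmx_coef0 x :
  (char_poly (regmx x))`_0 = x.1 * x.1 - D * x.2 * x.2.
Proof. by rewrite char_poly_det det_mx22 !mxE /= sqrrN expr1n mul1r. Qed.

End RegularRepresentation.

Lemma detTrE (F : fieldType) (D : F) (x1 x2 : F * F) :
  detTr D x1 x2 = 4%:R * D * (x1.1 * x2.2 - x2.1 * x1.2) ^+ 2.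
Proof. by rewrite /detTr /trK /mulK /=; ring. Qed.

Lemma DB_block (F : fieldType) m n (A : 'M[F]_m) (M : 'M[F]_n) :
  DB (block_mx A 0 0 M) = DB A * ((- 4%:R) ^+ (odd m && odd n + n./2) * \det M).
Proof. by rewrite /DB det_ublock halfD !exprD; ring. Qed.

Section Valuation.
Variables (F : fieldType) (v : F -> int).
Hypothesis HF : unram2adic v.
Implicit Types (a b c s t u w x y z D : F) (p q r : {poly F}).

Lemma vM x y : x != 0 -> y != 0 -> v (x * y) = v x + v y.
Proof. exact: (v_mul HF). Qed.

Lemma v_addmin x y : x != 0 -> y != 0 -> x + y != 0 ->
  Num.min (v x) (v y) <= v (x + y).
Proof. exact: (v_add HF). Qed.

Lemma v1 : v 1 = 0.
Proof.
have e : v (1 * 1) = v 1 + v 1 := vM (oner_neq0 F) (oner_neq0 F).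
by move: e; rewrite mulr1; lia.
Qed.

Lemma vN x : x != 0 -> v (- x) = v x.
Proof.
move=> x0; have N1 : (-1 : F) != 0 by rewrite oppr_eq0 oner_neq0.
have vN1 : v (-1) = 0.
  have e : v (-1 * -1) = v (-1) + v (-1) := vM N1 N1.
  by move: e; rewrite mulrNN mulr1 v1; lia.
by rewrite -mulN1r vM // vN1 add0r.
Qed.

Lemma vV x : x != 0 -> v x^-1 = - v x.
Proof.
move=> x0; have e : v (x * x^-1) = v x + v x^-1 := vM x0 (invr_neq0 x0).
by move: e; rewrite mulfV // v1; lia.
Qed.

Lemma vX x n : x != 0 -> v (x ^+ n) = v x * n%:Z.
Proof.
move=> x0; elim: n => [|n IH]; first by rewrite expr0 v1 mulr0.
by rewrite exprS vM ?expf_neq0 // IH; lia.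
Qed.

Lemma pow2_neq0 n : (2%:R : F) ^+ n != 0.
Proof. exact/expf_neq0/(two_neq0 HF). Qed.

Lemma v_pow2 n : v (2%:R ^+ n) = n%:Z.
Proof. by rewrite vX ?(two_neq0 HF) // (v_two HF) mul1r. Qed.

Lemma natr4 : (4%:R : F) = 2%:R ^+ 2.
Proof. by rewrite -natrX. Qed.

Lemma N4_neq0 : (- 4%:R : F) != 0.
Proof. by rewrite oppr_eq0 natr4 pow2_neq0. Qed.

Lemma vN4 : v (- 4%:R) = 2.
Proof. by rewrite vN natr4 ?pow2_neq0 ?v_pow2. Qed.

Lemma exists_v (z : int) : exists2 t : F, t != 0 & v t = z.
Proof.
case: z => n; first by exists (2%:R ^+ n); rewrite ?pow2_neq0 ?v_pow2.
exists (2%:R ^+ n.+1)^-1; first by rewrite invr_eq0 pow2_neq0.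
by rewrite vV ?pow2_neq0 // v_pow2 NegzE.
Qed.

Lemma vD_lt x y : x != 0 -> y != 0 -> v x < v y -> x + y != 0 /\ v (x + y) = v x.
Proof.
move=> x0 y0 lt_xy.
have xy0 : x + y != 0.
  by apply: contraTneq lt_xy => /eqP; rewrite addr_eq0 => /eqP ->; rewrite vN // ltxx.
split=> //.
have ny0 : - y != 0 by rewrite oppr_eq0.
have := v_addmin xy0 ny0; rewrite addrK vN // => /(_ x0).
rewrite ge_min (leNgt (v y)) lt_xy orbF => le_sx.
have := v_addmin x0 y0 xy0; rewrite (min_l (ltW lt_xy)) => le_xs.
by apply/eqP; rewrite eq_le le_sx le_xs.
Qed.

Lemma integ0 : integ v 0. Proof. by rewrite /integ eqxx. Qed.
Lemma integ1 : integ v 1. Proof. by rewrite /integ v1 lexx orbT. Qed.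

Lemma integD x y : integ v x -> integ v y -> integ v (x + y).
Proof.
rewrite /integ; have [->|x0] := eqVneq x 0; first by rewrite add0r.
have [->|y0] := eqVneq y 0; first by rewrite addr0 (negPf x0).
have [//|xy0 /= vx vy] := eqVneq (x + y) 0.
by apply: le_trans (v_addmin x0 y0 xy0); rewrite le_min vx vy.
Qed.

Lemma integN x : integ v x -> integ v (- x).
Proof.
rewrite /integ; have [->|x0] := eqVneq x 0; first by rewrite oppr0 eqxx.
by rewrite oppr_eq0 (negPf x0) vN.
Qed.

Lemma integB x y : integ v x -> integ v y -> integ v (x - y).
Proof. by move=> ix iy; rewrite integD ?integN. Qed.

Lemma integM x y : integ v x -> integ v y -> integ v (x * y).
Proof.
rewrite /integ; have [->|x0] := eqVneq x 0; first by rewrite mul0r eqxx.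
have [->|y0] := eqVneq y 0; first by rewrite mulr0 eqxx.
by rewrite mulf_eq0 (negPf x0) (negPf y0) /= vM //; lia.
Qed.

Lemma integ_nat n : integ v n%:R.
Proof. by elim: n => [|n IH]; rewrite ?integ0 // mulrS integD ?integ1. Qed.

Lemma unitb_neq0 x : unitb v x -> x != 0.
Proof. by case/andP. Qed.

Lemma unitb_integ x : unitb v x -> integ v x.
Proof. by case/andP=> _ /eqP vx; rewrite /integ vx lexx orbT. Qed.

Lemma unitb1 : unitb v 1.
Proof. by rewrite /unitb oner_neq0 v1. Qed.

Lemma unitbN x : unitb v x -> unitb v (- x).
Proof. by move=> /andP[x0 /eqP vx]; rewrite /unitb oppr_eq0 x0 vN // vx. Qed.

Lemma unitbV x : unitb v x -> unitb v x^-1.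
Proof. by move=> /andP[x0 /eqP vx]; rewrite /unitb invr_eq0 x0 vV // vx. Qed.

Lemma unitbM x y : unitb v x -> unitb v y -> unitb v (x * y).
Proof.
move=> /andP[x0 /eqP vx] /andP[y0 /eqP vy].
by rewrite /unitb mulf_neq0 //= vM // vx vy.
Qed.

Definition in2o (x : F) : bool := (x == 0) || (1 <= v x).

Lemma in2o_nonunit x : integ v x -> ~~ unitb v x -> in2o x.
Proof. by rewrite /integ /unitb /in2o; have [|x0] := eqVneq x 0 => //=; lia. Qed.

Lemma in2oD x y : in2o x -> in2o y -> in2o (x + y).
Proof.
rewrite /in2o; have [->|x0] := eqVneq x 0; first by rewrite add0r.
have [->|y0] := eqVneq y 0; first by rewrite addr0 (negPf x0).
have [//|xy0 /= vx vy] := eqVneq (x + y) 0.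
by apply: le_trans (v_addmin x0 y0 xy0); rewrite le_min vx vy.
Qed.

Lemma in2oMl x y : in2o x -> integ v y -> in2o (x * y).
Proof.
rewrite /in2o /integ; have [->|x0] := eqVneq x 0; first by rewrite mul0r eqxx.
have [->|y0] := eqVneq y 0; first by rewrite mulr0 eqxx.
by rewrite mulf_eq0 (negPf x0) (negPf y0) /= vM //; lia.
Qed.

Lemma in2oMr x y : integ v x -> in2o y -> in2o (x * y).
Proof. by move=> ix iy; rewrite mulrC in2oMl. Qed.

Lemma unitbD_in2o x y : unitb v x -> in2o y -> unitb v (x + y).
Proof.
move=> /andP[x0 /eqP vx]; rewrite /in2o; have [->|y0 /= vy] := eqVneq y 0.
  by rewrite addr0 /unitb x0 vx.
have lt_xy : v x < v y by rewrite vx; apply: lt_le_trans vy.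
have [xy0 vxy] := vD_lt x0 y0 lt_xy.
by rewrite /unitb xy0 vxy vx.
Qed.

Lemma in2o_4M x : integ v x -> in2o (4%:R * x).
Proof.
move=> ix; rewrite natr4 expr2 -mulrA; apply: in2oMl; last exact: integM (integ_nat 2) ix.
by rewrite /in2o (v_two HF) lexx orbT.
Qed.

Lemma unitb_1mod4 c : integ v c -> unitb v (1 + 4%:R * c).
Proof. by move=> ic; apply: unitbD_in2o unitb1 (in2o_4M ic). Qed.

(** * Gauss's lemma and integrality of norms *)

Lemma exists_min_v (s : seq F) : has (predC1 0) s ->
  exists2 x, x \in s & x != 0 /\ {in s, forall y, y != 0 -> v x <= v y}.
Proof.
elim: s => [|a s IH] //=; have [->|a0] /= := eqVneq a 0.
  case/IH=> x xs [x0 min_x]; exists x; first by rewrite inE xs orbT.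
  by split=> // y; rewrite inE => /orP[/eqP->|/min_x]; rewrite ?eqxx.
have [/IH[x xs [x0 min_x]]|] := boolP (has (predC1 0) s).
  have [le_ax|lt_xa] := leP (v a) (v x).
    exists a; rewrite ?mem_head //; split=> // y; rewrite inE.
    by case/orP=> [/eqP->|/min_x min_xy /min_xy]; rewrite ?lexx // => /(le_trans le_ax).
  exists x; first by rewrite inE xs orbT.
  by split=> // y; rewrite inE => /orP[/eqP->|/min_x] //; rewrite ltW.
rewrite -all_predC => /allP s0; exists a; rewrite ?mem_head //; split=> // y.
by rewrite inE => /orP[/eqP->|/s0 /=]; rewrite ?lexx ?negbK // => /eqP->; rewrite eqxx.
Qed.

Definition primitive p : Prop :=
  (forall i, integ v p`_i) /\ exists i, unitb v p`_i.

Lemma primitive_scale p : p != 0 ->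
  exists2 x : F, x != 0 & primitive (x^-1 *: p) /\ forall i, p`_i != 0 -> v x <= v p`_i.
Proof.
move=> p0; have lead_in : lead_coef p \in (p : seq F).
  by rewrite lead_coefE mem_nth // ltn_predL size_poly_gt0.
have coef_in i : p`_i != 0 -> p`_i \in (p : seq F).
  by move=> pi0; apply/mem_nth; rewrite ltnNge; apply: contra pi0 => /(nth_default 0) ->.
have [|x xp [x0 min_x]] := exists_min_v (s := p).
  by apply/hasP; exists (lead_coef p); rewrite //= lead_coef_eq0.
exists x => //; split=> [|i pi0]; last exact: min_x (coef_in i pi0) pi0.
split=> [i|]; last by exists (index x p); rewrite coefZ nth_index // mulVf ?unitb1.
rewrite coefZ; have [->|pi0] := eqVneq p`_i 0; first by rewrite mulr0 integ0.
rewrite /integ mulf_eq0 invr_eq0 (negPf x0) (negPf pi0) /= vM ?invr_eq0 // vV //.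
by rewrite addrC subr_ge0 min_x ?coef_in.
Qed.

(* Gauss: the coefficient of index i0 + j0, for the least i0 and j0 with
   p`_i0 and q`_j0 units, is a unit plus a sum of elements of 2o. *)
Lemma primitive_mul_unit_coef p q : primitive p -> primitive q ->
  exists n, unitb v (p * q)`_n.
Proof.
move=> [ip up] [iq uq]; have [i0 ui0 min_i0] := ex_minnP up.
have [j0 uj0 min_j0] := ex_minnP uq.
exists (i0 + j0)%N; rewrite coefM (bigD1 (Ordinal (leq_addr j0 i0.+1))) //= addKn.
apply: unitbD_in2o; first exact: unitbM.
apply: (big_ind in2o) => [|x y|[i /= lt_i] ne_i]; rewrite ?/in2o ?eqxx //; first exact: in2oD.
have {}ne_i : i != i0 by apply: contraNneq ne_i => eq_i; apply/eqP/val_inj.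
have [lt_i0|lt_i0] := ltnP i i0.
  apply: in2oMl (iq _); apply: in2o_nonunit (ip _) _.
  by apply: contraTN lt_i0 => /min_i0; rewrite -leqNgt.
apply: in2oMr (ip _) _; apply: in2o_nonunit (iq _) _.
by apply/negP => /min_j0; lia.
Qed.

Lemma monic_integ_factor p q : p \is monic -> q \is monic ->
  (forall i, integ v (p * q)`_i) -> forall i, integ v q`_i.
Proof.
move=> pm qm ipq.
have [xp xp0 [Pp min_xp]] := primitive_scale (monic_neq0 pm).
have [xq xq0 [Qp min_xq]] := primitive_scale (monic_neq0 qm).
have [n un] := primitive_mul_unit_coef Pp Qp.
have vxp : v xp <= 0.
  by rewrite -v1 -(monicP pm) lead_coefE min_xp // -lead_coefE (monicP pm) oner_neq0.
have vx : 0 <= v xp + v xq.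
  have e : (p * q)`_n = xp * xq * (xp^-1 *: p * (xq^-1 *: q))`_n.
    by rewrite -scalerAl -scalerAr !coefZ; field; rewrite xp0 xq0.
  case/andP: un => un0 /eqP vun.
  have := ipq n; rewrite e /integ !mulf_eq0 (negPf xp0) (negPf xq0) (negPf un0) /=.
  by rewrite !vM ?mulf_neq0 // vun addr0.
move=> i; rewrite /integ; have [//|qi0 /=] := eqVneq q`_i 0.
have vxq : 0 <= v xq by lia.
exact: le_trans vxq (min_xq i qi0).
Qed.

Lemma integ_min_annihilator n (A : 'M[F]_n.+1) p q :
  p \is monic -> (forall i, integ v p`_i) -> horner_mx A p = 0 ->
  q \is monic -> horner_mx A q = 0 ->
  (forall r, (size r < size q)%N -> horner_mx A r = 0 -> r = 0) ->
  forall i, integ v q`_i.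
Proof.
move=> pm ip Ap0 qm Aq0 qmin.
have pq0 : p %% q = 0.
  apply: qmin; first by rewrite ltn_modp monic_neq0.
  have := congr1 (horner_mx A) (divp_eq p q).
  by rewrite rmorphD rmorphM /= Aq0 mulr0 add0r Ap0 => <-.
have ep : p = p %/ q * q by rewrite {1}(divp_eq p q) pq0 addr0.
apply: (@monic_integ_factor (p %/ q)) => //; last by rewrite -ep.
by rewrite -(monicMr _ qm) -ep.
Qed.

Lemma norm_integ D (x : F * F) : intK v D x -> integ v (x.1 * x.1 - D * x.2 * x.2).
Proof.
case=> p [pm [ip px0]]; have {px0} Ap0 : horner_mx (regmx D x) p = 0.
  by rewrite -regmx_evalK px0; apply/matrixP => i j; rewrite !mxE /= mulr0 !if_same.
case: x Ap0 => a b /=; have [->|b0] := eqVneq b 0 => Ap0.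
  have Aq0 : horner_mx (regmx D (a, 0)) ('X - a%:P) = 0.
    by rewrite rmorphB /= horner_mx_X horner_mx_C regmx_scalar subrr.
  have qmin r : (size r < size ('X - a%:P)%R)%N ->
      horner_mx (regmx D (a, 0)) r = 0 -> r = 0.
    by rewrite size_XsubC; exact: horner_mx_size1_eq0.
  have := integ_min_annihilator pm ip Ap0 (monicXsubC a) Aq0 qmin 0.
  rewrite coefB coefX coefC /= sub0r mulr0 subr0 => /integN.
  by rewrite opprK => ia; apply: integM.
have qmin r : (size r < size (char_poly (regmx D (a, b))))%N ->
    horner_mx (regmx D (a, b)) r = 0 -> r = 0.
  by rewrite size_char_poly; exact: regmx_annihilator_size.
have := integ_min_annihilator pm ip Ap0 (char_poly_monic _) (Cayley_Hamilton _) qmin 0.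
by rewrite char_poly_regmx_coef0.
Qed.

Lemma intK_of D (x : F * F) p : p \is monic -> (forall i, integ v p`_i) ->
  horner_mx (regmx D x) p = 0 -> intK v D x.
Proof.
move=> pm ip Ap0; exists p; split=> //; split=> //.
by apply: (@regmx_eq0 _ D); rewrite regmx_evalK.
Qed.

Lemma integ_coefC c i : integ v c -> integ v c%:P`_i.
Proof. by rewrite coefC; case: (i == 0)%N => // _; exact: integ0. Qed.

Lemma integ_coefX i : integ v ('X : {poly F})`_i.
Proof. by rewrite coefX integ_nat. Qed.

Lemma integ_coefXn n i : integ v ('X^n : {poly F})`_i.
Proof. by rewrite coefXn integ_nat. Qed.

Lemma intK1 D : intK v D (1, 0).
Proof.
apply: (@intK_of _ _ ('X - 1%:P)); first exact: monicXsubC.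
  by move=> i; rewrite coefB integB ?integ_coefX ?integ_coefC ?integ1.
by rewrite rmorphB /= horner_mx_X horner_mx_C regmx_scalar subrr.
Qed.

Lemma intK_sqrt D t : integ v (D * t * t) -> intK v D (0, t).
Proof.
move=> iDtt; apply: (@intK_of _ _ ('X^2 - (D * t * t)%:P)); first exact: monicXnsubC.
  by move=> i; rewrite coefB integB ?integ_coefXn ?integ_coefC.
rewrite rmorphB rmorphXn /= horner_mx_X horner_mx_C.
apply/matrixP => i j; rewrite expr2 -mulmxE !mxE big_ord_recl big_ord1 !mxE.
by case: i => [[|[|i]] Hi] //; case: j => [[|[|j]] Hj] //=; rewrite ?mulr0n ?mulr1n; ring.
Qed.

(* (1 + sqrt D / s) / 2 is a root of X^2 - X - c. *)
Lemma intK_half D s c : s != 0 -> integ v c -> D = s * s * (1 + 4%:R * c) ->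
  intK v D (2%:R^-1, (2%:R * s)^-1).
Proof.
move=> s0 ic eD; have two0 := two_neq0 HF.
apply: (@intK_of _ _ ('X^2 - 'X - c%:P)).
- apply/monicP; rewrite -addrA lead_coefDl ?lead_coefXn //.
  by rewrite size_polyXn -opprD size_polyN size_XaddC.
- by move=> i; rewrite !coefB !integB ?integ_coefC ?integ_coefX ?integ_coefXn.
rewrite !rmorphB rmorphXn /= horner_mx_X horner_mx_C.
apply/matrixP => i j; rewrite expr2 -mulmxE !mxE big_ord_recl big_ord1 !mxE.
case: i => [[|[|i]] Hi] //; case: j => [[|[|j]] Hj] //=;
  rewrite ?mulr0n ?mulr1n ?eD; field; by apply/andP.
Qed.

(** * The discriminant ideal of F(sqrt D) *)

Lemma discset_wit D : D != 0 -> discset v D (if oddz (v D) then 3 else 2).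
Proof.
move=> D0; have [t t0 vt] := exists_v (- (v D %/ 2)%Z).
have Dtt0 : D * t * t != 0 by rewrite !mulf_neq0.
have vDtt : v (D * t * t) = if oddz (v D) then 1 else 0.
  by rewrite !vM ?mulf_neq0 // vt /oddz; case: ifP; lia.
exists (1, 0), (0, t); split; first exact: intK1.
split; first by apply: intK_sqrt; rewrite /integ vDtt; case: ifP; rewrite ?orbT.
have -> : detTr D (1, 0) (0, t) = 2%:R ^+ 2 * (D * t * t).
  by rewrite detTrE natr4 /=; ring.
rewrite mulf_neq0 ?pow2_neq0 // vM ?pow2_neq0 // v_pow2 vDtt.
by case: ifP.
Qed.

Lemma integ_DsqB D u w : integ v (D * u * u) -> integ v (D * w * w) ->
  integ v (D * (u - w) * (u - w)).
Proof.
have [->|D0] := eqVneq D 0; first by rewrite !mul0r integ0.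
have [->|u0] := eqVneq u 0; first by move=> _ ?; rewrite sub0r -mulrA mulrNN mulrA.
have [->|w0] := eqVneq w 0; first by rewrite subr0.
have [->|uw0] := eqVneq (u - w) 0; first by rewrite !mulr0 integ0.
have vD2 z : z != 0 -> v (D * z * z) = v D + 2 * v z.
  by move=> z0; rewrite !vM ?mulf_neq0 //; lia.
rewrite /integ !mulf_eq0 (negPf D0) (negPf u0) (negPf w0) (negPf uw0) /= !vD2 //.
have nw0 : - w != 0 by rewrite oppr_eq0.
have := v_addmin u0 nw0 uw0; rewrite vN // /Order.min; case: ifP; lia.
Qed.

Lemma v_detTr D (x1 x2 : F * F) : detTr D x1 x2 != 0 ->
  v (detTr D x1 x2) = 2 + v D + 2 * v (x1.1 * x2.2 - x2.1 * x1.2).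
Proof.
rewrite detTrE natr4; set e := _ - _ => d0.
have D0 : D != 0 by apply: contraNneq d0 => ->; rewrite mulr0 mul0r.
have e0 : e != 0 by apply: contraNneq d0 => ->; rewrite expr0n mulr0.
by rewrite !vM ?mulf_neq0 ?expf_neq0 ?pow2_neq0 ?(two_neq0 HF) // (v_two HF); lia.
Qed.

Lemma discset_odd D n : discset v D n -> odd n = oddz (v D).
Proof.
case=> x1 [x2 [_ [_ [d0 vd]]]]; move: (v_detTr d0); rewrite vd /oddz.
by move: (v D) (v _) => a b; lia.
Qed.

Lemma integ_norm_odd D a b : D != 0 -> oddz (v D) ->
  integ v (a * a - D * b * b) -> integ v a /\ integ v (D * b * b).
Proof.
move=> D0 oddD; have [->|a0] := eqVneq a 0.
  by rewrite mul0r sub0r => /integN; rewrite opprK integ0.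
have [->|b0] := eqVneq b 0.
  rewrite !mulr0 subr0 integ0 /integ mulf_eq0 orbb (negPf a0) /= vM //.
  by split=> //; lia.
have aa0 : a * a != 0 by rewrite mulf_neq0.
have Dbb0 : - (D * b * b) != 0 by rewrite oppr_eq0 !mulf_neq0.
have vaa : v (a * a) = 2 * v a by rewrite vM //; lia.
have vDbb : v (- (D * b * b)) = v D + 2 * v b.
  by rewrite vN ?mulf_neq0 // !vM ?mulf_neq0 //; lia.
have [N0 vNab] : a * a - D * b * b != 0 /\
    v (a * a - D * b * b) = Num.min (v (a * a)) (v (- (D * b * b))).
  case: ltgtP => [lt|lt|eq]; first exact: vD_lt.
    by rewrite addrC; exact: vD_lt.
  by move: eq oddD; rewrite vaa vDbb /oddz; lia.
rewrite /integ (negPf N0) (negPf a0) mulf_eq0 mulf_eq0 (negPf D0) (negPf b0) /=.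
rewrite vNab le_min -(vN (x := D * b * b)) ?mulf_neq0 // vaa vDbb.
by case/andP; split; lia.
Qed.

Lemma discset_ge3 D n : discset v D n -> oddz (v D) -> (3 <= n)%N.
Proof.
case=> -[a1 b1] [[a2 b2] [i1 [i2 [d0 vd]]]] oddD.
have D0 : D != 0 by apply: contraNneq d0 => ->; rewrite detTrE mulr0 mul0r.
have [ia1 iDb1] := integ_norm_odd D0 oddD (norm_integ i1).
have [ia2 iDb2] := integ_norm_odd D0 oddD (norm_integ i2).
have iDab u b : integ v u -> integ v (D * b * b) -> integ v (D * (u * b) * (u * b)).
  have -> : D * (u * b) * (u * b) = u * u * (D * b * b) by ring.
  by move=> iu iDb; apply: integM (integM iu iu) iDb.
have := integ_DsqB (iDab _ _ ia1 iDb2) (iDab _ _ ia2 iDb1).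
move: (v_detTr d0) oddD; rewrite vd /= /integ.
set e := _ - _; have e0 : e != 0.
  by apply: contraNneq d0 => e0; rewrite detTrE /= -/e e0 expr0n mulr0.
rewrite !mulf_eq0 (negPf D0) (negPf e0) /= !vM ?mulf_neq0 // /oddz.
by move: (v D) (v e) => x y; lia.
Qed.

Definition sq_1mod4 x : Prop :=
  exists s c, [/\ s != 0, integ v c & x = s * s * (1 + 4%:R * c)].

Lemma sq_1mod4_neq0 x : sq_1mod4 x -> x != 0.
Proof.
case=> s [c [s0 ic ->]]; have /andP[u0 _] := unitb_1mod4 ic.
by rewrite !mulf_neq0.
Qed.

Lemma v_sq_1mod4 x : sq_1mod4 x -> ~~ oddz (v x).
Proof.
case=> s [c [s0 ic ->]]; have /andP[u0 /eqP vu] := unitb_1mod4 ic.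
by rewrite !vM ?mulf_neq0 // vu /oddz; lia.
Qed.

Lemma sq_1mod4M x y : sq_1mod4 x -> sq_1mod4 y -> sq_1mod4 (x * y).
Proof.
case=> s [c [s0 ic ->]] [t [d [t0 id ->]]].
exists (s * t), (c + d + 4%:R * c * d); split; first by rewrite mulf_neq0.
  by rewrite !integD ?integM ?integ_nat.
by ring.
Qed.

Lemma sq_1mod4V x : sq_1mod4 x -> sq_1mod4 x^-1.
Proof.
case=> s [c [s0 ic ->]]; have /andP[u0 /eqP vu] := unitb_1mod4 ic.
exists s^-1, (- c / (1 + 4%:R * c)); split; first by rewrite invr_eq0.
  apply: integM (integN ic) _.
  by rewrite /integ invr_eq0 (negPf u0) /= vV // vu.
by field; rewrite s0 u0.
Qed.

(* For integral x_i = a_i + b_i sqrt D with unit discriminant 4 D e^2, where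
   e := a1 b2 - a2 b1, the norm identity P^2 - D e^2 = N(x1) N(x2) =: N with
   P := a1 a2 - D b1 b2 forces v(P^2) = -2, so D = (P/e)^2 (1 + 4c) with
   c := - N / (4 P^2) integral. *)
Lemma discset0_sq_1mod4 D : discset v D 0 -> sq_1mod4 D.
Proof.
case=> -[a1 b1] [[a2 b2] [i1 [i2 [d0 vd]]]].
have := integM (norm_integ i1) (norm_integ i2); move: d0 (v_detTr d0) => /=.
rewrite vd detTrE /=; set e := a1 * b2 - a2 * b1.
set N := (_ * _ - _) * _; set P := a1 * a2 - D * b1 * b2 => d0 vDe iN.
have PeN : P * P - D * e * e = N by rewrite /P /e /N; ring.
have D0 : D != 0 by apply: contraNneq d0 => ->; rewrite mulr0 mul0r.
have e0 : e != 0 by apply: contraNneq d0 => ->; rewrite expr0n mulr0.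
have Dee0 : D * e * e != 0 by rewrite !mulf_neq0.
have vDee : v (D * e * e) = -2 by rewrite !vM ?mulf_neq0 //; lia.
have [PP0 vPP] : P * P != 0 /\ v (P * P) = -2.
  have -> : P * P = D * e * e + N by rewrite -PeN; ring.
  have [->|N0] := eqVneq N 0; first by rewrite addr0.
  have lt : v (D * e * e) < v N by move: iN; rewrite /integ (negPf N0) vDee /=; lia.
  by have [-> ->] := vD_lt Dee0 N0 lt.
have P0 : P != 0 by apply: contraNneq PP0 => ->; rewrite mul0r.
exists (P / e), (- N / (4%:R * (P * P))); split; first by rewrite mulf_neq0 ?invr_eq0.
  have [->|N0] := eqVneq N 0; first by rewrite oppr0 mul0r integ0.
  have h4 : 4%:R * (P * P) != 0 by rewrite natr4 mulf_neq0 ?pow2_neq0.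
  rewrite /integ mulf_eq0 oppr_eq0 invr_eq0 (negPf N0) (negPf h4) /=.
  rewrite vM ?oppr_eq0 ?invr_eq0 // vN // vV // vM ?natr4 ?pow2_neq0 // v_pow2 vPP.
  by move: iN; rewrite /integ (negPf N0) /=; lia.
by rewrite -PeN; field; rewrite e0 P0 natr4 pow2_neq0.
Qed.

Lemma sq_1mod4_discset0 D : sq_1mod4 D -> discset v D 0.
Proof.
case=> s [c [s0 ic eD]]; have /andP[u0 /eqP vu] := unitb_1mod4 ic.
exists (1, 0), (2%:R^-1, (2%:R * s)^-1); split; first exact: intK1.
split; first exact: intK_half ic eD.
have -> : detTr D (1, 0) (2%:R^-1, (2%:R * s)^-1) = 1 + 4%:R * c.
  by rewrite detTrE /= eD; field; rewrite s0 (two_neq0 HF).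
by rewrite u0 vu.
Qed.

Lemma reflect_pb (P : Prop) : reflect P (pb P).
Proof. by rewrite /pb; case: excluded_middle_informative => p; constructor. Qed.

Lemma ordDisc_sq D : is_square D -> ordDisc v D = 0%N.
Proof. by rewrite /ordDisc => /reflect_pb ->. Qed.

Lemma ordDisc_min D : D != 0 -> ~ is_square D ->
  discset v D (ordDisc v D) /\ forall n, discset v D n -> (ordDisc v D <= n)%N.
Proof.
move=> D0 nsq; rewrite /ordDisc; case: reflect_pb => // _.
case: excluded_middle_informative => [ex|[]]; last by eexists; exact: discset_wit.
case: ex_minnP => m /reflect_pb Dm min_m; split=> // n Dn.
exact/min_m/reflect_pb.
Qed.

Lemma not_square_oddz D : D != 0 -> oddz (v D) -> ~ is_square D.
Proof.
move=> D0 + [y yy]; have y0 : y != 0 by apply: contraNneq D0 => y0; rewrite -yy y0 mul0r.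
by rewrite -yy vM // /oddz; lia.
Qed.

Lemma ordDisc_odd D : D != 0 -> oddz (v D) -> ordDisc v D = 3%N.
Proof.
move=> D0 oddD; have [Dd min_d] := ordDisc_min D0 (not_square_oddz D0 oddD).
have := min_d _ (discset_wit D0); rewrite oddD => le3.
by apply/eqP; rewrite eqn_leq le3 (discset_ge3 Dd oddD).
Qed.

Lemma ordDisc_even D : D != 0 -> ~~ oddz (v D) -> ~ is_square D ->
  ordDisc v D != 0%N -> ordDisc v D = 2%N.
Proof.
move=> D0 evenD nsq; have [Dd min_d] := ordDisc_min D0 nsq.
have := min_d _ (discset_wit D0); have := discset_odd Dd.
by rewrite (negPf evenD); case: (ordDisc v D) => [|[|[|]]].
Qed.

Lemma ordDisc_eq0 D : D != 0 -> ordDisc v D = 0%N <-> sq_1mod4 D.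
Proof.
move=> D0; have [[y yy]|nsq] := excluded_middle_informative (is_square D).
  split=> [_|]; last by rewrite ordDisc_sq //; exists y.
  exists y, 0; split; rewrite ?integ0 ?mulr0 ?addr0 ?mulr1 //.
  by apply: contraNneq D0 => y0; rewrite -yy y0 mul0r.
have [Dd min_d] := ordDisc_min D0 nsq.
split=> [d0|/sq_1mod4_discset0 /min_d]; last by rewrite leqn0 => /eqP.
by apply: discset0_sq_1mod4; rewrite -d0.
Qed.

Lemma xi_eq0 D : (xi v D == 0) = (ordDisc v D != 0%N).
Proof.
rewrite /xi; case: reflect_pb => [sq|_]; first by rewrite ordDisc_sq.
by case: (ordDisc v D == 0)%N.
Qed.

Lemma sqr_xi D : xi v D != 0 -> xi v D ^+ 2 = 1.
Proof. by rewrite /xi; case: reflect_pb => _; case: (ordDisc v D == 0)%N. Qed.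

Lemma xi_oddz D : D != 0 -> oddz (v D) -> xi v D = 0.
Proof. by move=> D0 oddD; apply/eqP; rewrite xi_eq0 ordDisc_odd. Qed.

Lemma xi_eq0_mul_sq_1mod4 D x : D != 0 -> sq_1mod4 x ->
  (xi v (D * x) == 0) = (xi v D == 0).
Proof.
move=> D0 sx; have x0 := sq_1mod4_neq0 sx.
have Dx0 : D * x != 0 by rewrite mulf_neq0.
rewrite !xi_eq0; congr negb; apply/eqP/eqP.
  move=> /(ordDisc_eq0 Dx0) /sq_1mod4M /(_ (sq_1mod4V sx)).
  by rewrite mulfK // => /(ordDisc_eq0 D0).
by move=> /(ordDisc_eq0 D0) /sq_1mod4M /(_ sx) /(ordDisc_eq0 Dx0).
Qed.

Definition Delta_even D : int := v D - (ordDisc v D)%:Z + 1 - xi v D ^+ 2.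

Lemma Delta_evenE D : D != 0 ->
  Delta_even D = v D - if xi v D != 0 then 0 else if oddz (v D) then 2 else 1.
Proof.
move=> D0; rewrite /Delta_even; case: ifPn => [xi0|].
  by move: (xi0); rewrite xi_eq0 negbK => /eqP ->; rewrite sqr_xi //; lia.
rewrite negbK => /eqP xi0; rewrite xi0 expr0n /=; case: ifPn => [oddD|evenD].
  by rewrite ordDisc_odd //; lia.
have nz : ordDisc v D != 0%N by rewrite -xi_eq0 xi0.
have nsq : ~ is_square D by move/ordDisc_sq; apply/eqP.
by rewrite ordDisc_even //; lia.
Qed.

Lemma Delta_even_mul D x : D != 0 -> x != 0 -> ~~ oddz (v x) ->
  (xi v (D * x) == 0) = (xi v D == 0) -> Delta_even (D * x) = Delta_even D + v x.
Proof.
move=> D0 x0 evenx xiDx; rewrite !Delta_evenE ?mulf_neq0 // xiDx vM //.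
have -> : oddz (v D + v x) = oddz (v D) by move: evenx; rewrite /oddz; lia.
by case: ifP => _; [|case: ifP => _]; lia.
Qed.

(** * Delta of a block sum *)

Lemma DB_neq0 n (M : 'M[F]_n) : \det M != 0 -> DB M != 0.
Proof. by move=> M0; rewrite mulf_neq0 ?expf_neq0 ?N4_neq0. Qed.

Lemma oddz_v_DB n (M : 'M[F]_n) : \det M != 0 -> oddz (v (DB M)) = oddz (v (\det M)).
Proof.
move=> M0; rewrite /DB vM ?expf_neq0 ?N4_neq0 // vX ?N4_neq0 // vN4 /oddz.
by move: (v _) => z; lia.
Qed.

Lemma DeltaE n (M : 'M[F]_n) :
  Delta v M = if odd n then v (DB M) else Delta_even (DB M).
Proof. by []. Qed.

Lemma unimod_diag_det_unit n (M : 'M[F]_n) : unimod_diag v M -> unitb v (\det M).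
Proof.
case/andP => /forallP offd /forallP ud; have -> : M = diag_mx (\row_i M i i).
  apply/matrixP => i j; rewrite !mxE; have [->|ij] := eqVneq i j; first by rewrite mulr1n.
  by rewrite mulr0n; move/forallP/(_ j): (offd i); rewrite ij => /eqP.
rewrite det_diag; apply: (big_ind (unitb v)) => [|x y|i _]; first exact: unitb1.
  exact: unitbM.
by rewrite mxE.
Qed.

Lemma half_even_unimod_dim n (M : 'M[F]_n) : half_even_unimod v M -> n = 2%N.
Proof. by case/andP => /andP[/andP[/eqP]]. Qed.

Lemma half_even_unimod_disc n (M : 'M[F]_n) : half_even_unimod v M ->
  unitb v (- 4%:R * \det M) /\ sq_1mod4 (- 4%:R * \det M).
Proof.
case/andP => /andP[/andP[/eqP n2 sym] idiag] u2M; subst n.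
have [eM10 ib] : M 1 0 = M 0 1 /\ integ v (2%:R * M 0 1).
  by move/forallP: sym => /(_ 0) /forallP /(_ 1) /andP[/eqP ->].
have iac : integ v (M 0 0 * M 1 1) by rewrite integM ?(forallP idiag).
move: u2M; rewrite detZ det_mx22 eM10.
set a := M 0 0; set c := M 1 1; set b := 2%:R * M 0 1.
have -> : (2%:R ^+ 2 : F) * (a * c - M 0 1 * M 0 1) = - (- 4%:R * (a * c - M 0 1 * M 0 1)).
  by ring.
have -> : - 4%:R * (a * c - M 0 1 * M 0 1) = b * b - 4%:R * (a * c) by rewrite /b; ring.
move=> /unitbN; rewrite opprK => u; split => //.
have ubb : unitb v (b * b).
  by rewrite -(subrK (4%:R * (a * c)) (b * b)); apply: unitbD_in2o u (in2o_4M iac).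
have /andP[bb0 _] := ubb; have b0 : b != 0 by apply: contraNneq bb0 => ->; rewrite mul0r.
exists b, (- (a * c) / (b * b)); split => //.
  exact: integM (integN iac) (unitb_integ (unitbV ubb)).
by field.
Qed.

Lemma det_Bpre_neq0 (d k : nat -> nat) (C : forall i, 'M[F]_(d i)) j :
  (forall i, (i < j)%N -> \det (C i) != 0) -> \det (Bpre k C j) != 0.
Proof.
elim: j => [|j IH] Cdet; first by rewrite det_mx00 oner_neq0.
rewrite /= det_ublock detZ !mulf_neq0 ?expf_neq0 ?pow2_neq0 ?(two_neq0 HF) ?Cdet //.
by apply: IH => i /ltnW; apply: Cdet.
Qed.

Section BlockStep.
Variables (m n : nat) (A : 'M[F]_m) (M : 'M[F]_n) (k : nat).
Hypothesis A0 : \det A != 0.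
Let B := block_mx A 0 0 (2%:R ^+ k *: M).

Lemma Delta_block_rank1_even : n = 1%N -> ~~ odd m -> unitb v (\det M) ->
  (oddz (v (\det A)) -> Delta v B - Delta v A = k%:Z + 2) /\
  (~~ oddz (v (\det A)) -> xiB v A = 0 -> Delta v B - Delta v A = k%:Z + 1) /\
  (xiB v A != 0 -> Delta v B - Delta v A = k%:Z).
Proof.
move=> n1 evenm /andP[M0 /eqP vM0]; rewrite /B; subst n.
have vB : v (DB (block_mx A 0 0 (2%:R ^+ k *: M))) = v (DB A) + k%:Z.
  rewrite DB_block (negPf evenm) detZ expr1 /= expr0 mul1r.
  have vfac : v (2%:R ^+ k * \det M) = k%:Z by rewrite vM ?pow2_neq0 // v_pow2 vM0 addr0.
  by rewrite vM ?DB_neq0 ?mulf_neq0 ?pow2_neq0 // vfac.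
rewrite !DeltaE oddD (negPf evenm) /= vB Delta_evenE ?DB_neq0 // -oddz_v_DB // /xiB.
split=> [oddA|]; [|split=> [evenA ->|->]]; rewrite ?eqxx ?(negPf evenA) /=; try lia.
by rewrite xi_oddz ?DB_neq0 // eqxx /= oddA; lia.
Qed.

Lemma Delta_block_rank1_odd : n = 1%N -> odd m -> unitb v (\det M) ->
  (oddz (v (\det B)) -> Delta v B - Delta v A = k%:Z) /\
  (~~ oddz (v (\det B)) -> xiB v B = 0 -> Delta v B - Delta v A = k%:Z + 1) /\
  (xiB v B != 0 -> Delta v B - Delta v A = k%:Z + 2).
Proof.
move=> n1 oddm /andP[M0 /eqP vM0]; rewrite /B; subst n.
set B' := block_mx _ _ _ _.
have eDB : DB B' = DB A * (- 4%:R * (2%:R ^+ k * \det M)).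
  by rewrite DB_block oddm detZ expr1.
have vfac : v (- 4%:R * (2%:R ^+ k * \det M)) = 2 + k%:Z.
  by rewrite !vM ?mulf_neq0 ?N4_neq0 ?pow2_neq0 // vN4 v_pow2 vM0 addr0.
have B'0 : DB B' != 0 by rewrite eDB mulf_neq0 ?DB_neq0 // !mulf_neq0 ?N4_neq0 ?pow2_neq0.
have detB'0 : \det B' != 0 by rewrite det_ublock detZ mulf_neq0 // mulf_neq0 ?pow2_neq0.
have vB : v (DB B') = v (DB A) + 2 + k%:Z.
  by rewrite eDB vM ?DB_neq0 ?mulf_neq0 ?N4_neq0 ?pow2_neq0 // vfac addrA.
rewrite !DeltaE oddD oddm /= Delta_evenE // -oddz_v_DB // /xiB vB.
split=> [oddB|]; [|split=> [evenB ->|->]]; rewrite ?eqxx ?(negPf evenB) /=; try lia.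
by rewrite xi_oddz ?vB // eqxx /= oddB; lia.
Qed.

Lemma DB_block_rank2 : n = 2%N ->
  DB B = DB A * ((2%:R ^+ k) ^+ 2 * (- 4%:R * \det M)).
Proof.
by move=> n2; rewrite /B; subst n; rewrite DB_block andbF detZ [_ ^+ (_ + _)]expr1; ring.
Qed.

Lemma Delta_block_unimod_rank2 : n = 2%N -> unitb v (\det M) ->
  (~~ odd m -> xiB v A = 0 /\ xiB v B = 0) -> Delta v B = Delta v A + 2 * k%:Z + 2.
Proof.
move=> n2 /andP[M0 /eqP vM0]; have evenn : odd n = false by rewrite n2.
rewrite /xiB !DeltaE DB_block_rank2 // oddD evenn addbF.
set x := (2%:R ^+ k) ^+ 2 * _; have x0 : x != 0 by rewrite !mulf_neq0 ?N4_neq0 ?pow2_neq0.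
have vx : v x = 2 * k%:Z + 2.
  by rewrite !vM ?mulf_neq0 ?N4_neq0 ?pow2_neq0 // v_pow2 vN4 vM0; lia.
case: ifP => [_ _|_ /(_ isT) [xiA xiAx]].
  by rewrite vM ?DB_neq0 // vx addrA.
rewrite Delta_even_mul ?DB_neq0 ?xiA ?xiAx ?vx ?addrA // /oddz; lia.
Qed.

Lemma Delta_block_half_even : half_even_unimod v M -> Delta v B = Delta v A + 2 * k%:Z.
Proof.
move=> hM; have n2 := half_even_unimod_dim hM; have evenn : odd n = false by rewrite n2.
have [/andP[d0 /eqP vd] sd] := half_even_unimod_disc hM.
rewrite !DeltaE DB_block_rank2 // oddD evenn addbF.
set x := (2%:R ^+ k) ^+ 2 * _.
have sx : sq_1mod4 x.
  apply: sq_1mod4M sd; exists (2%:R ^+ k); exists 0; split; rewrite ?integ0 ?pow2_neq0 //.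
  by rewrite mulr0 addr0 mulr1 expr2.
have vx : v x = 2 * k%:Z.
  rewrite /x vM ?expf_neq0 ?pow2_neq0 ?(two_neq0 HF) // vd addr0.
  by rewrite vM ?pow2_neq0 // v_pow2; lia.
have [DA0 x0] := (DB_neq0 A0, sq_1mod4_neq0 sx).
case: ifP => _; first by rewrite vM // vx.
by rewrite Delta_even_mul ?(v_sq_1mod4 sx) ?(xi_eq0_mul_sq_1mod4 DA0 sx) // vx.
Qed.

End BlockStep.

End Valuation.

Theorem lemma2p2 (F : fieldType) (v : F -> int) (HF : unram2adic v)
  (r : nat) (d k : nat -> nat) (C : forall i, 'M[F]_(d i)) :
  preoptimal v r.+1 d k C ->
  let B := Bpre k C r.+1 in
  let B1 := Bpre k C r in
  let kr := (k r)%:Z in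
  (* (1) *)
  (d r = 1%N ->
     (* (1.1) *)
     (~~ odd (dsum d r) ->
        (oddz (v (\det B1)) -> Delta v B - Delta v B1 = kr + 2) /\
        (~~ oddz (v (\det B1)) -> xiB v B1 = 0 -> Delta v B - Delta v B1 = kr + 1) /\
        (xiB v B1 != 0 -> Delta v B - Delta v B1 = kr)) /\
     (* (1.2) *)
     (odd (dsum d r) ->
        (oddz (v (\det B)) -> Delta v B - Delta v B1 = kr) /\
        (~~ oddz (v (\det B)) -> xiB v B = 0 -> Delta v B - Delta v B1 = kr + 1) /\
        (xiB v B != 0 -> Delta v B - Delta v B1 = kr + 2))) /\
  (* (2) *)
  (d r = 2%N -> unimod_diag v (C r) -> Delta v B = Delta v B1 + 2 * kr + 2) /\
  (* (3) *)
  (half_even_unimod v (C r) -> Delta v B = Delta v B1 + 2 * kr).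
Proof.
move=> [shape [_ [_ [PO3 _]]]] B B1 kr.
have B1_0 : \det B1 != 0.
  apply: (det_Bpre_neq0 HF) => i /ltnW /shape[_ /orP[/(unimod_diag_det_unit HF) u|]].
    exact: unitb_neq0 u.
  by case/(half_even_unimod_disc HF) => /unitb_neq0; rewrite mulf_eq0 negb_or => /andP[].
split; [move=> dr1 | split; [move=> dr2 ud | exact: (Delta_block_half_even HF)]].
  have ud : unimod_diag v (C r).
    have [_ /orP[//|/half_even_unimod_dim d2]] := shape r (ltnSn r).
    by rewrite d2 in dr1.
  have uC := unimod_diag_det_unit HF ud.
  split=> [evenr|oddr]; first exact: (Delta_block_rank1_even HF).
  exact: (Delta_block_rank1_odd HF).
apply: (Delta_block_unimod_rank2 HF) (unimod_diag_det_unit HF ud) _ => // evenr.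
by have [_ [[_ //]|[oddr _]]] := PO3 r (ltnSn r) ud dr2; rewrite oddr in evenr.
Qed.
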